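(* Let $V$ be an $n$-dimensional real vector space. (i) If $L\subset V\oplus V^*$ is a forward LD structure, there is a symmetric bilinear form $\Psi$ on $V$ such that the symmetric bilinear form $\langle\!\langle (v_1,\eta_1),(v_2,\eta_2)\rangle\!\rangle=\langle\eta_1|v_2\rangle+\langle\eta_2|v_1\rangle-2\Psi(v_1,v_2)$ on $V\oplus V^*$ is nondegenerate of signature $(n,n)$ and $L$ is maximally isotropic for it. (ii) If $L$ is a backward LD structure, there is a symmetric bilinear form $\Phi$ on $V^*$ such that $\langle\!\langle (v_1,\eta_1),(v_2,\eta_2)\rangle\!\rangle=\langle\eta_1|v_2\rangle+\langle\eta_2|v_1\rangle-2\Phi(\eta_1,\eta_2)$ is nondegenerate of signature $(n,n)$ and $L$ is maximally isotropic for it.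
   Context: $\rho,\rho^*$ are the projections of $V\oplus V^*$ onto $V,V^*$; $\langle\eta|v\rangle$ the natural pairing; $W^\circ$ the annihilator; $L\cap V=\{v:(v,0)\in L\}$, $L\cap V^*=\{\eta:(0,\eta)\in L\}$. A forward Leibniz–Dirac (LD) structure is a subspace $L\subset V\oplus V^*$ with $\rho(L)^{\circ}=L\cap V^*$; a backward LD structure is one with $\rho^*(L)^{\circ}=L\cap V$. *)

(* V = 'rV[R]_n, dual space Vd = 'rV[R]_n with the pairing
   <eta|v> = eta . v, V (+) Vd = 'rV[R]_(n + n) (first n coords: V, last n: Vd).
   Subspaces are row spaces of square matrices (mxalgebra). *)
From HB Require Import structures.
From mathcomp Require Import all_boot all_order all_algebra.
Set Implicit Arguments. Unset Strict Implicit. Unset Printing Implicit Defensive.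
Import Order.TTheory GRing.Theory Num.Theory.
Local Open Scope ring_scope.

Section LD.
Variables (R : realFieldType) (n : nat).

Definition pairing (eta v : 'rV[R]_n) : R := (eta *m v^T) 0 0.

Definition rho (x : 'rV[R]_(n + n)) : 'rV[R]_n := lsubmx x.
Definition rhos (x : 'rV[R]_(n + n)) : 'rV[R]_n := rsubmx x.

Definition in_rho (L : 'M[R]_(n + n)) (v : 'rV[R]_n) : Prop :=
  exists x : 'rV[R]_(n + n), (x <= L)%MS /\ rho x = v.
Definition in_rhos (L : 'M[R]_(n + n)) (eta : 'rV[R]_n) : Prop :=
  exists x : 'rV[R]_(n + n), (x <= L)%MS /\ rhos x = eta.

Definition forward_LD (L : 'M[R]_(n + n)) : Prop :=
  forall eta : 'rV[R]_n,
    (forall v, in_rho L v -> pairing eta v = 0) <-> (row_mx 0 eta <= L)%MS.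

Definition backward_LD (L : 'M[R]_(n + n)) : Prop :=
  forall v : 'rV[R]_n,
    (forall eta, in_rhos L eta -> pairing eta v = 0) <-> (row_mx v 0 <= L)%MS.

Definition bform (M : 'M[R]_n) (a b : 'rV[R]_n) : R := (a *m M *m b^T) 0 0.

Definition form_fwd (P : 'M[R]_n) (x y : 'rV[R]_(n + n)) : R :=
  pairing (rhos x) (rho y) + pairing (rhos y) (rho x) - 2 * bform P (rho x) (rho y).

Definition form_bwd (P : 'M[R]_n) (x y : 'rV[R]_(n + n)) : R :=
  pairing (rhos x) (rho y) + pairing (rhos y) (rho x) - 2 * bform P (rhos x) (rhos y).

End LD.

Section Forms.
Variables (R : realFieldType) (m : nat).
Implicit Types (B : 'rV[R]_m -> 'rV[R]_m -> R) (U L : 'M[R]_m).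

Definition nondeg_form B : Prop :=
  forall x, (forall y, B x y = 0) -> x = 0.

Definition pos_def_on B U : Prop :=
  forall x, (x <= U)%MS -> x != 0 -> 0 < B x x.
Definition neg_def_on B U : Prop :=
  forall x, (x <= U)%MS -> x != 0 -> B x x < 0.

Definition has_signature B (p q : nat) : Prop :=
  ((exists U, \rank U = p /\ pos_def_on B U) /\
   (forall U, pos_def_on B U -> (\rank U <= p)%N)) /\
  ((exists U, \rank U = q /\ neg_def_on B U) /\
   (forall U, neg_def_on B U -> (\rank U <= q)%N)).

Definition isotropic B L : Prop :=
  forall x y, (x <= L)%MS -> (y <= L)%MS -> B x y = 0.

Definition max_isotropic B L : Prop :=
  isotropic B L /\ forall L', isotropic B L' -> (L <= L')%MS -> (L' <= L)%MS.

End Forms.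

From HB Require Import structures.
From mathcomp Require Import all_boot all_order all_algebra.
From mathcomp Require Import zify ring lra.
Import Order.TTheory GRing.Theory Num.Theory.
Local Open Scope ring_scope.
Set Implicit Arguments. Unset Strict Implicit. Unset Printing Implicit Defensive.

(* Write a subspace L of V (+) V* as the row space of a matrix whose left and
   right blocks are A = rho(L) and B = rhos(L).  The forward condition
   rho(L)^o = L cap V* says that every row combination w with w A = 0 also
   satisfies (w B) A^T = 0; by a pseudo-inverse argument this factors the
   "pairing matrix" as B A^T = A M A^T, and Psi = (M + M^T)/2 makes L
   isotropic for <<.,.>>_Psi.  The annihilator half gives L cap V* = rho(L)^o,
   of dimension n - rank A, so rank L >= n.

   Independently of L, <<.,.>>_Psi is nondegenerate of signature (n, n): the
   graphs of Psi + 1 and Psi - 1 are positive/negative definite n-dimensional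
   subspaces and V* is a null subspace of dimension n, which bounds every
   definite subspace.  The same bound shows that an isotropic subspace of
   dimension >= n is maximally isotropic, which proves (i).

   Part (ii) follows from (i) by the swap involution (v, eta) |-> (eta, v),
   which exchanges backward and forward LD structures and carries the form of
   (ii) built from Phi to the form of (i) built from Psi := Phi; the file
   first records how all the form-theoretic notions are transported along
   any involution. *)

Section FormRanks.
Variables (R : realFieldType) (m : nat) (F : 'rV[R]_m -> 'rV[R]_m -> R).

Lemma trivial_cap_rank k l (X : 'M[R]_(k, m)) (Y : 'M[R]_(l, m)) :
  (forall x : 'rV[R]_m, (x <= X)%MS -> (x <= Y)%MS -> x = 0) ->
  (\rank X + \rank Y <= m)%N.
Proof.
move=> cap0.
have capX0 : (X :&: Y <= (0 : 'M_m))%MS.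
  apply/row_subP => i; have := row_sub i (X :&: Y)%MS.
  by rewrite sub_capmx => /andP [iX iY]; rewrite (cap0 _ iX iY) sub0mx.
have := mxrank_adds_leqif X Y; rewrite capX0 => -[_ /eqP <-].
exact: rank_leq_col.
Qed.

Lemma anisotropic_null_rank l (U : 'M[R]_m) (N : 'M[R]_(l, m)) :
  (forall x, (x <= U)%MS -> x != 0 -> F x x != 0) ->
  (forall x, (x <= N)%MS -> F x x = 0) ->
  (\rank U + \rank N <= m)%N.
Proof.
move=> anisoU nullN; apply: trivial_cap_rank => x xU xN.
apply/eqP; apply: contraT => /(anisoU x xU).
by rewrite nullN // eqxx.
Qed.

Lemma pos_def_null_rank l (U : 'M[R]_m) (N : 'M[R]_(l, m)) :
  pos_def_on F U -> (forall x, (x <= N)%MS -> F x x = 0) ->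
  (\rank U + \rank N <= m)%N.
Proof. by move=> posU; apply: anisotropic_null_rank => x xU /(posU x xU)/gt_eqF->. Qed.

Lemma neg_def_null_rank l (U : 'M[R]_m) (N : 'M[R]_(l, m)) :
  neg_def_on F U -> (forall x, (x <= N)%MS -> F x x = 0) ->
  (\rank U + \rank N <= m)%N.
Proof. by move=> negU; apply: anisotropic_null_rank => x xU /(negU x xU)/lt_eqF->. Qed.

Lemma signature_of_null_subspace l (Up Un : 'M[R]_m) (N : 'M[R]_(l, m)) :
  pos_def_on F Up -> neg_def_on F Un -> (forall x, (x <= N)%MS -> F x x = 0) ->
  (\rank Up + \rank N = m)%N -> (\rank Un + \rank N = m)%N ->
  has_signature F (\rank Up) (\rank Un).
Proof.
move=> posUp negUn nullN rkp rkn; split; split.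
- by exists Up.
- by move=> U /pos_def_null_rank /(_ nullN); lia.
- by exists Un.
- by move=> U /neg_def_null_rank /(_ nullN); lia.
Qed.

Lemma max_isotropic_of_rank (U L : 'M[R]_m) :
  pos_def_on F U -> isotropic F L -> (m <= \rank U + \rank L)%N ->
  max_isotropic F L.
Proof.
move=> posU isoL rkL; split=> // L' isoL' sLL'.
have := pos_def_null_rank posU (N := L') (fun x xL' => isoL' x x xL' xL').
have := mxrankS sLL'; rewrite -(mxrank_leqif_sup sLL').2 => ? ?.
by apply/eqP; lia.
Qed.

End FormRanks.

Section Involution.
Variables (R : realFieldType) (m : nat) (S : 'M[R]_m).
Hypothesis SS : S *m S = 1%:M.
Variables (F G : 'rV[R]_m -> 'rV[R]_m -> R).
Hypothesis GFS : forall x y, G x y = F (x *m S) (y *m S).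

Lemma mulmxSS k (X : 'M[R]_(k, m)) : X *m S *m S = X.
Proof. by rewrite -mulmxA SS mulmx1. Qed.

Lemma submx_mulS k l (X : 'M[R]_(k, m)) (U : 'M[R]_(l, m)) :
  (X <= U *m S)%MS = (X *m S <= U)%MS.
Proof.
apply/idP/idP => sub; last by rewrite -(mulmxSS X) submxMr.
by rewrite -(mulmxSS U) submxMr.
Qed.

Lemma rank_mulS (U : 'M[R]_m) : \rank (U *m S) = \rank U.
Proof. by apply: mxrankMfree; rewrite row_free_unit; case: (mulmx1_unit SS). Qed.

Lemma mulS_eq0 (x : 'rV[R]_m) : (x *m S == 0) = (x == 0).
Proof.
apply/eqP/eqP => [xS0|->]; last exact: mul0mx.
by rewrite -(mulmxSS x) xS0 mul0mx.
Qed.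

Lemma pos_def_transport U : pos_def_on G U <-> pos_def_on F (U *m S).
Proof.
split=> posU x.
  rewrite submx_mulS -mulS_eq0 => xSU /(posU _ xSU).
  by rewrite GFS mulmxSS.
move=> xU; rewrite -mulS_eq0 GFS; apply: posU.
by rewrite submx_mulS mulmxSS.
Qed.

Lemma neg_def_transport U : neg_def_on G U <-> neg_def_on F (U *m S).
Proof.
split=> negU x.
  rewrite submx_mulS -mulS_eq0 => xSU /(negU _ xSU).
  by rewrite GFS mulmxSS.
move=> xU; rewrite -mulS_eq0 GFS; apply: negU.
by rewrite submx_mulS mulmxSS.
Qed.

Lemma isotropic_transport L : isotropic G L <-> isotropic F (L *m S).
Proof.
split=> isoL x y.
  rewrite !submx_mulS => xS yS.
by rewrite -[x]mulmxSS -[y]mulmxSS -GFS isoL.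
by move=> xL yL; rewrite GFS isoL // submx_mulS mulmxSS.
Qed.

Lemma nondeg_transport : nondeg_form F -> nondeg_form G.
Proof.
move=> ndF x Gx0; apply/eqP; rewrite -mulS_eq0 (ndF (x *m S)) //.
by move=> y; rewrite -(mulmxSS y) -GFS Gx0.
Qed.

Lemma signature_transport p q : has_signature F p q -> has_signature G p q.
Proof.
move=> [[[Up [rkp posUp]] maxp] [[Un [rkn negUn]] maxn]]; split; split.
- exists (Up *m S); rewrite rank_mulS pos_def_transport mulmxSS; exact: conj.
- by move=> U /pos_def_transport /maxp; rewrite rank_mulS.
- exists (Un *m S); rewrite rank_mulS neg_def_transport mulmxSS; exact: conj.
- by move=> U /neg_def_transport /maxn; rewrite rank_mulS.
Qed.

Lemma max_isotropic_transport L :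
  max_isotropic F (L *m S) -> max_isotropic G L.
Proof.
move=> [isoLS maxLS]; split; first exact/isotropic_transport.
move=> L' /isotropic_transport isoL'S sLL'.
by rewrite -(mulmxSS L') -(mulmxSS L) submxMr // maxLS // submxMr.
Qed.

End Involution.

Section ForwardForm.
Variables (R : realFieldType) (n : nat).
Local Notation V := 'rV[R]_n.

Lemma mx110 : (0 : 'M[R]_1) 0 0 = 0.
Proof. by rewrite mxE. Qed.

Lemma mx11_tr (a : 'M[R]_1) : a^T 0 0 = a 0 0.
Proof. by rewrite mxE. Qed.

Lemma mx11Z (c : R) (a : 'M[R]_1) : (c *: a) 0 0 = c * a 0 0.
Proof. by rewrite mxE. Qed.

Lemma mx11D (a b : 'M[R]_1) : (a + b) 0 0 = a 0 0 + b 0 0.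
Proof. by rewrite mxE. Qed.

Lemma mx11N (a : 'M[R]_1) : (- a) 0 0 = - a 0 0.
Proof. by rewrite mxE. Qed.

Lemma pairing_sym (a b : V) : pairing a b = pairing b a.
Proof. by rewrite /pairing !mxE; apply: eq_bigr => i _; rewrite !mxE mulrC. Qed.

Lemma sqnorm_gt0 (v : V) : v != 0 -> 0 < (v *m v^T) 0 0.
Proof.
move=> nz; rewrite mxE.
have sq_ge0 i : true -> 0 <= v 0 i * v^T i 0 by rewrite mxE -expr2 sqr_ge0.
rewrite lt_def sumr_ge0 // andbT; apply: contra nz => /eqP /psumr_eq0P sq0.
apply/eqP/rowP => i; rewrite mxE.
by have /eqP := sq0 sq_ge0 i isT; rewrite mxE -expr2 sqrf_eq0 => /eqP.
Qed.

Lemma sqnorm_eq0 (v : V) : (v *m v^T) 0 0 = 0 -> v = 0.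
Proof.
move=> v0; apply/eqP; apply: contraT => /sqnorm_gt0.
by rewrite v0 ltxx.
Qed.

Lemma rho_row_mx (a b : V) : rho (row_mx a b) = a.
Proof. exact: row_mxKl. Qed.

Lemma rhos_row_mx (a b : V) : rhos (row_mx a b) = b.
Proof. exact: row_mxKr. Qed.

Lemma row_mx_rho (x : 'rV[R]_(n + n)) : x = row_mx (rho x) (rhos x).
Proof. by rewrite hsubmxK. Qed.

Lemma form_fwdE (P : 'M[R]_n) (a b c d : V) :
  form_fwd P (row_mx a b) (row_mx c d) =
  (b *m c^T) 0 0 + (d *m a^T) 0 0 - 2 * (a *m P *m c^T) 0 0.
Proof. by rewrite /form_fwd !rho_row_mx !rhos_row_mx. Qed.

Lemma form_fwd_nondeg (P : 'M[R]_n) : nondeg_form (form_fwd P).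
Proof.
move=> x x_perp; rewrite (row_mx_rho x) in x_perp *.
have rho0 : rho x = 0.
  apply: sqnorm_eq0; have := x_perp (row_mx 0 (rho x)).
  by rewrite form_fwdE trmx0 !mulmx0 mx110 mulr0 subr0 add0r.
have := x_perp (row_mx (rhos x) 0).
rewrite rho0 form_fwdE !mul0mx mx110 mulr0 subr0 addr0 => /sqnorm_eq0 ->.
by rewrite row_mx0.
Qed.

(* The graph {(w, w X)} of X, as the row space of a square matrix. *)
Definition graph (X : 'M[R]_n) : 'M[R]_(n + n) := col_mx (row_mx 1%:M X) 0.

Lemma rank_graph (X : 'M[R]_n) : \rank (graph X) = n.
Proof.
apply/eqP; rewrite /graph rank_col_mx0 eqn_leq rank_leq_row /=.
have := mxrankM_maxl (row_mx 1%:M X) (col_mx 1%:M 0).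
by rewrite mul_row_col mulmx1 mulmx0 addr0 mxrank1.
Qed.

Lemma sub_graph (x : 'rV[R]_(n + n)) (X : 'M[R]_n) :
  (x <= graph X)%MS -> exists w : V, x = row_mx w (w *m X).
Proof.
case/submxP => D ->; exists (lsubmx D).
by rewrite -{1}(hsubmxK D) mul_row_col mulmx0 addr0 mul_mx_row mulmx1.
Qed.

Lemma form_fwd_graph (P X : 'M[R]_n) (w : V) :
  form_fwd P (row_mx w (w *m X)) (row_mx w (w *m X)) =
  2 * ((w *m X *m w^T) 0 0 - (w *m P *m w^T) 0 0).
Proof. by rewrite form_fwdE; ring. Qed.

Lemma graph_definite (P X : 'M[R]_n) (x : 'rV[R]_(n + n)) :
  (x <= graph X)%MS -> x != 0 ->
  exists2 w : V, 0 < (w *m w^T) 0 0 &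
    form_fwd P x x = 2 * ((w *m (X - P) *m w^T) 0 0).
Proof.
move=> /sub_graph [w ->] nz; exists w.
  by apply: sqnorm_gt0; apply: contra nz => /eqP ->; rewrite mul0mx row_mx0.
by rewrite form_fwd_graph mulmxBr mulmxBl mx11D mx11N.
Qed.

Definition dual_space : 'M[R]_(n + n) := col_mx (row_mx 0 1%:M) 0.

Lemma form_fwd_dual_null (P : 'M[R]_n) x :
  (x <= dual_space)%MS -> form_fwd P x x = 0.
Proof.
case/submxP => D ->; rewrite -{1 2}(hsubmxK D) mul_row_col mulmx0 addr0.
by rewrite mul_mx_row mulmx0 form_fwdE trmx0 !mulmx0 mx110 mulr0 subr0 addr0.
Qed.

Lemma rank_dual_space : \rank dual_space = n.
Proof. by rewrite rank_col_mx0 rank_row_0mx mxrank1. Qed.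

Lemma graph_pos_def (P : 'M[R]_n) : pos_def_on (form_fwd P) (graph (P + 1%:M)).
Proof.
move=> x xG nz; have [w w_gt0 ->] := graph_definite P xG nz.
by rewrite addrC addKr mulmx1; lra.
Qed.

Lemma graph_neg_def (P : 'M[R]_n) : neg_def_on (form_fwd P) (graph (P - 1%:M)).
Proof.
move=> x xG nz; have [w w_gt0 ->] := graph_definite P xG nz.
by rewrite addrC addKr mulmxN mulmx1 mulNmx mx11N; lra.
Qed.

Lemma form_fwd_signature (P : 'M[R]_n) : has_signature (form_fwd P) n n.
Proof.
have := signature_of_null_subspace (graph_pos_def (P := P)) (graph_neg_def (P := P))
  (@form_fwd_dual_null P).
by rewrite !rank_graph rank_dual_space; apply.
Qed.

Lemma form_fwd_max_isotropic (P : 'M[R]_n) (L : 'M[R]_(n + n)) :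
  isotropic (form_fwd P) L -> (n <= \rank L)%N -> max_isotropic (form_fwd P) L.
Proof.
move=> isoL rkL; apply: max_isotropic_of_rank (graph_pos_def (P := P)) isoL _.
by rewrite rank_graph; lia.
Qed.

End ForwardForm.

Lemma factor_through_kernel (R : fieldType) k m (A B : 'M[R]_(k, m)) :
  (forall w : 'rV[R]_k, w *m A = 0 -> w *m B *m A^T = 0) ->
  exists M : 'M[R]_m, B *m A^T = A *m M *m A^T.
Proof.
move=> kerAB; pose G := pinvmx A.
have AGA : A *m G *m A = A by apply: mulmxKpV.
have lker : (A *m G - 1%:M) *m B *m A^T = 0.
  apply/row_matrixP => i; rewrite row0 !row_mul; apply: kerAB.
  by rewrite -row_mul mulmxBl AGA mul1mx subrr row0.
have AGC : B *m A^T = A *m G *m B *m A^T.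
  by move: lker; rewrite !mulmxBl mul1mx => /subr0_eq.
exists (G *m B *m A^T *m G^T).
by rewrite AGC -{2}AGA !trmx_mul !mulmxA.
Qed.

Section ForwardLD.
Variables (R : realFieldType) (n : nat) (L : 'M[R]_(n + n)).
Hypothesis LD : forward_LD L.
Local Notation A := (lsubmx L).
Local Notation B := (rsubmx L).

Lemma lsubmx_mul k (w : 'M[R]_(k, n + n)) : lsubmx (w *m L) = w *m A.
Proof. by rewrite -{1}(hsubmxK L) mul_mx_row row_mxKl. Qed.

Lemma rsubmx_mul k (w : 'M[R]_(k, n + n)) : rsubmx (w *m L) = w *m B.
Proof. by rewrite -{1}(hsubmxK L) mul_mx_row row_mxKr. Qed.

(* The inclusion L cap V* in rho(L)^o, in matrix form. *)
Lemma forward_kernel (w : 'rV[R]_(n + n)) : w *m A = 0 -> w *m B *m A^T = 0.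
Proof.
move=> wA0.
have wBL : (row_mx 0 (w *m B) <= L)%MS.
  by rewrite -wA0 -mul_mx_row hsubmxK submxMl.
apply/rowP => i; rewrite [RHS]mxE -((proj2 (LD _)) wBL (row i A)).
  by rewrite /pairing !mxE; apply: eq_bigr => j _; rewrite !mxE.
by exists (row i L); rewrite row_sub /rho rowE lsubmx_mul -rowE.
Qed.

(* The inclusion rho(L)^o in L cap V* gives dim L >= dim ker A^T = n - rank A. *)
Lemma forward_rank : (n <= \rank L)%N.
Proof.
pose K : 'M[R]_(n, n + n) := row_mx 0 (kermx A^T).
have KL : (K <= L)%MS.
  apply/row_subP => i; rewrite /K row_row_mx row0; apply: (proj1 (LD _)).
  move=> _ [x [/submxP [D ->] <-]]; rewrite /rho lsubmx_mul /pairing trmx_mul mulmxA.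
  by rewrite (sub_kermxP (row_sub i _)) mul0mx mxE.
pose Pr : 'M[R]_(n + n, n) := col_mx 1%:M 0.
have LPr : L *m Pr = A by rewrite -{1}(hsubmxK L) mul_row_col mulmx1 mulmx0 addr0.
have K_ker : (K <= L :&: kermx Pr)%MS.
  by rewrite sub_capmx KL sub_kermx /K mul_row_col mulmx0 mul0mx addr0 eqxx.
have := mxrank_mul_ker L Pr; rewrite LPr.
have := mxrankS K_ker; rewrite /K rank_row_0mx mxrank_ker mxrank_tr.
have := rank_leq_col A; lia.
Qed.

(* With B A^T = A M A^T, the symmetric part of M makes L isotropic. *)
Lemma forward_isotropic :
  exists Psi : 'M[R]_n, Psi^T = Psi /\ isotropic (form_fwd Psi) L.
Proof.
have [M BA] := factor_through_kernel forward_kernel.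
have AB : A *m B^T = A *m M^T *m A^T.
  by have := congr1 trmx BA; rewrite !trmx_mul !trmxK !mulmxA.
exists (2^-1 *: (M + M^T)); split.
  by rewrite linearZ /= linearD /= trmxK addrC.
move=> _ _ /submxP [w1 ->] /submxP [w2 ->].
rewrite /form_fwd /rho /rhos !lsubmx_mul !rsubmx_mul /pairing /bform.
have BA12 : w1 *m B *m (w2 *m A)^T = w1 *m (B *m A^T) *m w2^T.
  by rewrite trmx_mul !mulmxA.
have AB12 : (w2 *m B *m (w1 *m A)^T)^T = w1 *m (A *m B^T) *m w2^T.
  by rewrite !trmx_mul !trmxK !mulmxA.
have Psi12 : w1 *m A *m (2^-1 *: (M + M^T)) *m (w2 *m A)^T =
             2^-1 *: (w1 *m (B *m A^T + A *m B^T) *m w2^T).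
  by rewrite BA AB -scalemxAr -scalemxAl trmx_mul !(mulmxDr, mulmxDl) !mulmxA.
rewrite BA12 -[(w2 *m B *m _) 0 0]mx11_tr AB12 Psi12 mx11Z mulrA mulfV ?pnatr_eq0 // mul1r.
by rewrite mulmxDr mulmxDl mx11D subrr.
Qed.

End ForwardLD.

Lemma forward_lagrangian (R : realFieldType) (n : nat) (L : 'M[R]_(n + n)) :
  forward_LD L ->
  exists Psi : 'M[R]_n, Psi^T = Psi /\
    nondeg_form (form_fwd Psi) /\ has_signature (form_fwd Psi) n n /\
    max_isotropic (form_fwd Psi) L.
Proof.
move=> LD; have [Psi [Psi_sym isoL]] := forward_isotropic LD.
exists Psi; split=> //; split; first exact: form_fwd_nondeg.
split; first exact: form_fwd_signature.
exact: form_fwd_max_isotropic isoL (forward_rank LD).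
Qed.

Section Swap.
Variables (R : realFieldType) (n : nat).

Definition swap : 'M[R]_(n + n) := block_mx 0 1%:M 1%:M 0.

Lemma swap_involutive : swap *m swap = 1%:M.
Proof.
by rewrite mulmx_block !mulmx0 !mul0mx !mulmx1 !addr0 !add0r -scalar_mx_block.
Qed.

Lemma row_mx_swap (a b : 'rV[R]_n) : row_mx a b *m swap = row_mx b a.
Proof. by rewrite mul_row_block !mulmx0 !mulmx1 add0r addr0. Qed.

Lemma form_bwd_swap (P : 'M[R]_n) x y :
  form_bwd P x y = form_fwd P (x *m swap) (y *m swap).
Proof.
rewrite (row_mx_rho x) (row_mx_rho y) /form_bwd /form_fwd !row_mx_swap.
rewrite !rho_row_mx !rhos_row_mx !(pairing_sym (rho _)).
by rewrite (addrC (pairing (rhos x) _)).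
Qed.

Lemma in_rhos_swap (L : 'M[R]_(n + n)) eta :
  in_rhos L eta <-> in_rho (L *m swap) eta.
Proof.
have swap_rows (x : 'rV[R]_(n + n)) : rho (x *m swap) = rhos x /\ rhos (x *m swap) = rho x.
  by rewrite -[x in x *m swap]hsubmxK row_mx_swap rho_row_mx rhos_row_mx.
split=> -[x [xL <-]]; exists (x *m swap); split; try apply swap_rows.
  by rewrite submx_mulS ?mulmxSS ?swap_involutive.
by rewrite -submx_mulS ?swap_involutive.
Qed.

Lemma backward_forward_LD (L : 'M[R]_(n + n)) :
  backward_LD L -> forward_LD (L *m swap).
Proof.
move=> LD eta; rewrite submx_mulS ?swap_involutive // row_mx_swap -LD.
split=> ann e /in_rhos_swap e_in; rewrite pairing_sym; exact: ann.
Qed.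

End Swap.

Theorem proposition2p9 (R : realFieldType) (n : nat) :
  (forall L : 'M[R]_(n + n), forward_LD L ->
     exists Psi : 'M[R]_n, Psi^T = Psi /\
       nondeg_form (form_fwd Psi) /\ has_signature (form_fwd Psi) n n /\
       max_isotropic (form_fwd Psi) L) /\
  (forall L : 'M[R]_(n + n), backward_LD L ->
     exists Phi : 'M[R]_n, Phi^T = Phi /\
       nondeg_form (form_bwd Phi) /\ has_signature (form_bwd Phi) n n /\
       max_isotropic (form_bwd Phi) L).
Proof.
split=> [|L LD]; first exact: forward_lagrangian.
have [Phi [Phi_sym [nd [sig maxiso]]]] := forward_lagrangian (backward_forward_LD LD).
have swapE x y := @form_bwd_swap R n Phi x y; have SS := @swap_involutive R n.
exists Phi; split=> //; split; first exact: (nondeg_transport SS swapE nd).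
split; first exact: (signature_transport SS swapE sig).
exact: (max_isotropic_transport SS swapE maxiso).
Qed.
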